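(* Assume the capacities satisfy (C1)–(C3), and let $\gamma=\frac1{\tau-1}+\varepsilon<\frac12$ be as in (C3). Let $M$ be a random variable with $\mathbb P(M=m)=\lambda_m/l_N$, $1\le m\le N$, and let $d_N$ be a random variable with distribution $\{g^{(N)}_n\}_{n\ge0}$. Then $$\mathrm{Var}(\lambda_M)=O(N^\gamma)\qquad\text{and}\qquad\mathrm{Var}(d_N)=O(N^\gamma).$$
   Context: Capacities $\lambda_1,\dots,\lambda_N>0$ deterministic; $l_N=\sum_i\lambda_i$, $\mu_N=\frac1N\sum_i\lambda_i$, $\nu_N=\sum_i\lambda_i^2/\sum_i\lambda_i$, $f^{(N)}_n=\frac1N\sum_i e^{-\lambda_i}\frac{\lambda_i^n}{n!}$, $g^{(N)}_n=\frac{1}{N\mu_N}\sum_i e^{-\lambda_i}\frac{\lambda_i^{n+1}}{n!}$ ($n\ge0$); $d_{TV}(p,q)=\frac12\sum_j|p_j-q_j|$. (C1): there are $\mu\in(0,\infty)$, $\nu\in(1,\infty)$, $\alpha_1>0$ with $|\mu_N-\mu|,|\nu_N-\nu|=O(N^{-\alpha_1})$. (C2): there are $N$-independent sequences $f,g$ and $\alpha_2>0$ with $d_{TV}(f^{(N)},f),d_{TV}(g^{(N)},g)=O(N^{-\alpha_2})$. (C3): there is $\tau>3$ such that for every $\varepsilon>0$ (with $\gamma:=\frac1{\tau-1}+\varepsilon<\frac12$), $\limsup_N\frac1N\sum_i\lambda_i^{\tau-1-\varepsilon}<\infty$ and $\max_i\lambda_i\le N^\gamma$. *)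

From Stdlib Require Import Reals Arith Factorial.
From Coquelicot Require Import Coquelicot.
Open Scope R_scope.

Fixpoint sumN (N : nat) (f : nat -> R) : R :=
  match N with O => 0 | S n => sumN n f + f n end.

(* Capacities: lam N i is lambda_{i+1} at size N, for i < N. *)
Definition lN (lam : nat -> nat -> R) (N : nat) : R := sumN N (lam N).
Definition muN (lam : nat -> nat -> R) (N : nat) : R := lN lam N / INR N.
Definition nuN (lam : nat -> nat -> R) (N : nat) : R :=
  sumN N (fun i => (lam N i) ^ 2) / lN lam N.
Definition fN (lam : nat -> nat -> R) (N n : nat) : R :=
  / INR N * sumN N (fun i => exp (- lam N i) * (lam N i) ^ n / INR (Factorial.fact n)).
Definition gN (lam : nat -> nat -> R) (N n : nat) : R :=
  / (INR N * muN lam N) *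
  sumN N (fun i => exp (- lam N i) * (lam N i) ^ (S n) / INR (Factorial.fact n)).

Definition dTV (p q : nat -> R) : R := Series (fun j => Rabs (p j - q j)) / 2.

Definition bigO (u v : nat -> R) : Prop :=
  exists C : R, exists N0 : nat, forall N : nat, (N0 <= N)%nat -> Rabs (u N) <= C * v N.

Definition fin_mean (N : nat) (p x : nat -> R) : R := sumN N (fun i => p i * x i).
Definition fin_var (N : nat) (p x : nat -> R) : R :=
  sumN N (fun i => p i * (x i - fin_mean N p x) ^ 2).

Definition nat_mean (p : nat -> R) : R := Series (fun n => INR n * p n).
Definition nat_var (p : nat -> R) : R :=
  Series (fun n => (INR n - nat_mean p) ^ 2 * p n).

(** The size-biased capacity [λ_M] has mean [ν_N] and second moment
    [Σ λ_i^3 / l_N <= (max λ_i) ν_N], so [Var(λ_M) <= N^γ ν_N] by (C3).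
    The law [g^(N)] is the mixture of Poisson laws of parameter [λ_i] with
    weights [λ_i / l_N], so by the law of total variance
    [Var(d_N) = Var(λ_M) + E λ_M = Var(λ_M) + ν_N].  Finally (C1) keeps
    [ν_N] bounded and [N^γ >= 1]. *)

From Stdlib Require Import Reals Lra Lia Factorial.
From Coquelicot Require Import Coquelicot.
Open Scope R_scope.

Lemma sumN_ext N f g :
  (forall i, (i < N)%nat -> f i = g i) -> sumN N f = sumN N g.
Proof. induction N as [|N IH]; simpl; intros H; [reflexivity|]. rewrite IH, H; auto. Qed.

Lemma sumN_plus N f g : sumN N (fun i => f i + g i) = sumN N f + sumN N g.
Proof. induction N as [|N IH]; simpl; [ring|]. rewrite IH; ring. Qed.

Lemma sumN_scal N c f : sumN N (fun i => c * f i) = c * sumN N f.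
Proof. induction N as [|N IH]; simpl; [ring|]. rewrite IH; ring. Qed.

Lemma sumN_le N f g :
  (forall i, (i < N)%nat -> f i <= g i) -> sumN N f <= sumN N g.
Proof.
  induction N as [|N IH]; simpl; intros H; [lra|].
  assert (sumN N f <= sumN N g) by (apply IH; auto).
  assert (f N <= g N) by auto.
  lra.
Qed.

Lemma sumN_ge0 N f : (forall i, (i < N)%nat -> 0 <= f i) -> 0 <= sumN N f.
Proof.
  induction N as [|N IH]; simpl; intros H; [lra|].
  assert (0 <= sumN N f) by (apply IH; auto).
  assert (0 <= f N) by auto.
  lra.
Qed.

Lemma sumN_gt0 N f :
  N <> 0%nat -> (forall i, (i < N)%nat -> 0 < f i) -> 0 < sumN N f.
Proof.
  destruct N as [|N]; simpl; intros HN H; [lia|].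
  assert (0 <= sumN N f) by (apply sumN_ge0; intros; apply Rlt_le, H; lia).
  assert (0 < f N) by auto.
  lra.
Qed.

Lemma is_series_eq (a b : nat -> R) (l l' : R) :
  (forall n, a n = b n) -> l = l' -> is_series a l -> is_series b l'.
Proof. intros Hab <-; apply is_series_ext, Hab. Qed.

Lemma is_series_Rplus (a b : nat -> R) (la lb : R) :
  is_series a la -> is_series b lb -> is_series (fun n => a n + b n) (la + lb).
Proof. intros Ha Hb. exact (is_series_plus a b la lb Ha Hb). Qed.

Lemma is_series_Rscal (c : R) (a : nat -> R) (l : R) :
  is_series a l -> is_series (fun n => c * a n) (c * l).
Proof. intros H. exact (is_series_scal c a l H). Qed.

Lemma is_series_zero : is_series (fun _ => 0) 0.
Proof.
  apply is_series_Reals. intros e He. exists 0%nat. intros n _.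
  rewrite sum_cte, Rmult_0_l, R_dist_eq. exact He.
Qed.

Lemma is_series_sumN N (F : nat -> nat -> R) (L : nat -> R) :
  (forall i, (i < N)%nat -> is_series (F i) (L i)) ->
  is_series (fun n => sumN N (fun i => F i n)) (sumN N L).
Proof.
  induction N as [|N IH]; simpl; intros H; [exact is_series_zero|].
  apply is_series_Rplus; auto.
Qed.

Lemma is_series_shift (a : nat -> R) (l : R) :
  a 0%nat = 0 -> is_series (fun k => a (S k)) l -> is_series a l.
Proof.
  intros H0 H. apply is_series_decr_1.
  eapply is_series_eq; [reflexivity| |exact H].
  rewrite H0. change (l = l + - 0). ring.
Qed.

Definition poisson (x : R) (n : nat) : R := exp (- x) * x ^ n / INR (fact n).

Lemma poisson_succ x n : INR (S n) * poisson x (S n) = x * poisson x n.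
Proof.
  unfold poisson. rewrite fact_simpl, mult_INR. simpl pow.
  pose proof (INR_fact_neq_0 n). assert (INR (S n) <> 0) by apply not_0_INR, Nat.neq_succ_0.
  field. auto.
Qed.

Lemma is_series_poisson x : is_series (poisson x) 1.
Proof.
  assert (Hexp := proj1 (is_pseries_R _ _ _) (is_exp_Reals x)).
  eapply is_series_eq; [| |exact (is_series_Rscal (exp (- x)) _ _ Hexp)].
  - intros n. unfold poisson, Rdiv. ring.
  - rewrite <- exp_plus. replace (- x + x) with 0 by ring. apply exp_0.
Qed.

Lemma is_series_poisson_mean x : is_series (fun n => INR n * poisson x n) x.
Proof.
  apply is_series_shift; [apply Rmult_0_l|].
  eapply is_series_eq; [| |exact (is_series_Rscal x _ _ (is_series_poisson x))].
  - intros n. rewrite poisson_succ. reflexivity.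
  - ring.
Qed.

Lemma is_series_poisson_2nd_moment x :
  is_series (fun n => INR n ^ 2 * poisson x n) (x ^ 2 + x).
Proof.
  apply is_series_shift; [simpl; ring|].
  eapply is_series_eq; [| |exact (is_series_Rscal x _ _ (is_series_Rplus _ _ _ _
      (is_series_poisson_mean x) (is_series_poisson x)))].
  - intros n. replace (INR (S n) ^ 2 * poisson x (S n))
      with (INR (S n) * (INR (S n) * poisson x (S n))) by ring.
    rewrite poisson_succ, S_INR. ring.
  - ring.
Qed.

Lemma fin_var_eq N p x : sumN N p = 1 ->
  fin_var N p x = fin_mean N p (fun i => x i ^ 2) - fin_mean N p x ^ 2.
Proof.
  intros Hp. unfold fin_var, fin_mean. set (m := sumN N (fun i => p i * x i)).
  rewrite (sumN_ext N _ (fun i => (p i * x i ^ 2 + (-2 * m) * (p i * x i)) + m ^ 2 * p i))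
    by (intros; ring).
  rewrite !sumN_plus, !sumN_scal, Hp. fold m. ring.
Qed.

Lemma fin_var_ge0 N p x : (forall i, (i < N)%nat -> 0 <= p i) -> 0 <= fin_var N p x.
Proof.
  intros Hp. apply sumN_ge0. intros i Hi. apply Rmult_le_pos; [auto|apply pow2_ge_0].
Qed.

Lemma fin_var_le_mul_mean N p x P :
  sumN N p = 1 -> (forall i, (i < N)%nat -> 0 <= p i) ->
  (forall i, (i < N)%nat -> 0 <= x i <= P) ->
  fin_var N p x <= P * fin_mean N p x.
Proof.
  intros Hp Hp0 Hx. rewrite fin_var_eq by exact Hp.
  assert (fin_mean N p (fun i => x i ^ 2) <= P * fin_mean N p x).
  { unfold fin_mean. rewrite <- sumN_scal. apply sumN_le. intros i Hi.
    replace (P * (p i * x i)) with (p i * (x i * P)) by ring.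
    apply Rmult_le_compat_l; [auto|]. simpl. rewrite Rmult_1_r.
    apply Rmult_le_compat_l; apply Hx; assumption. }
  pose proof (pow2_ge_0 (fin_mean N p x)). lra.
Qed.

Lemma nat_var_moments (r : nat -> R) (mu s : R) :
  is_series r 1 -> is_series (fun n => INR n * r n) mu ->
  is_series (fun n => INR n ^ 2 * r n) s -> nat_var r = s - mu ^ 2.
Proof.
  intros H0 H1 H2. unfold nat_var, nat_mean. rewrite (is_series_unique _ _ H1).
  apply is_series_unique.
  eapply is_series_eq; [| |exact (is_series_Rplus _ _ _ _
      (is_series_Rplus _ _ _ _ H2 (is_series_Rscal (-2 * mu) _ _ H1))
      (is_series_Rscal (mu ^ 2) _ _ H0))].
  - intros n. cbv beta. ring.
  - ring.
Qed.

Lemma is_series_mixture N (p : nat -> R) (q : nat -> nat -> R) (a c : nat -> R) :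
  (forall i, (i < N)%nat -> is_series (fun n => a n * q i n) (c i)) ->
  is_series (fun n => a n * sumN N (fun i => p i * q i n)) (fin_mean N p c).
Proof.
  intros H. eapply is_series_eq; [| reflexivity |].
  2: { apply (is_series_sumN N (fun i n => p i * (a n * q i n))).
       intros i Hi. apply is_series_Rscal, H, Hi. }
  intros n. cbv beta. rewrite <- sumN_scal. apply sumN_ext. intros; ring.
Qed.

Lemma nat_var_mixture N (p : nat -> R) (q : nat -> nat -> R) (m v : nat -> R)
  (r : nat -> R) :
  sumN N p = 1 ->
  (forall n, r n = sumN N (fun i => p i * q i n)) ->
  (forall i, (i < N)%nat -> is_series (q i) 1) ->
  (forall i, (i < N)%nat -> is_series (fun n => INR n * q i n) (m i)) ->
  (forall i, (i < N)%nat -> is_series (fun n => INR n ^ 2 * q i n) (m i ^ 2 + v i)) ->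
  nat_var r = fin_var N p m + fin_mean N p v.
Proof.
  intros Hp Hr Hq0 Hq1 Hq2.
  rewrite (nat_var_moments r (fin_mean N p m) (fin_mean N p (fun i => m i ^ 2 + v i))).
  - rewrite fin_var_eq by exact Hp. unfold fin_mean.
    rewrite (sumN_ext N (fun i => p i * (m i ^ 2 + v i))
      (fun i => p i * m i ^ 2 + p i * v i)) by (intros; ring).
    rewrite sumN_plus. ring.
  - eapply is_series_eq; [| |apply (is_series_mixture N p q (fun _ => 1) (fun _ => 1))].
    + intros n. rewrite Hr. ring.
    + unfold fin_mean. transitivity (sumN N p); [apply sumN_ext; intros; ring | exact Hp].
    + intros i Hi. eapply is_series_eq; [| reflexivity | apply (Hq0 i Hi)].
      intros; ring.
  - eapply is_series_ext; [| apply is_series_mixture; exact Hq1].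
    intros n. rewrite Hr. reflexivity.
  - eapply is_series_ext; [| apply is_series_mixture; exact Hq2].
    intros n. rewrite Hr. reflexivity.
Qed.

Lemma sumN_size_biased N x : 0 < sumN N x -> sumN N (fun i => x i / sumN N x) = 1.
Proof.
  intros Hx. unfold Rdiv. rewrite (sumN_ext N _ (fun i => / sumN N x * x i)) by (intros; ring).
  rewrite sumN_scal. field. lra.
Qed.

Lemma nuN_size_biased_mean lam N :
  fin_mean N (fun m => lam N m / lN lam N) (lam N) = nuN lam N.
Proof.
  unfold fin_mean, nuN, Rdiv. rewrite <- (Rmult_comm (/ lN lam N)), <- sumN_scal.
  apply sumN_ext. intros; ring.
Qed.

Lemma gN_poisson_mixture lam N n : N <> 0%nat ->
  gN lam N n = sumN N (fun i => lam N i / lN lam N * poisson (lam N i) n).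
Proof.
  intros HN. unfold gN, muN.
  replace (INR N * (lN lam N / INR N)) with (lN lam N) by (field; apply not_0_INR, HN).
  rewrite <- sumN_scal. apply sumN_ext. intros i _.
  unfold poisson, Rdiv. simpl pow. ring.
Qed.

Section FixedSize.

Variables (lam : nat -> nat -> R) (N : nat).
Hypothesis HN : N <> 0%nat.
Hypothesis Hpos : forall i, (i < N)%nat -> 0 < lam N i.

Let size_biased_sum : sumN N (fun m => lam N m / lN lam N) = 1.
Proof. apply sumN_size_biased, sumN_gt0; assumption. Qed.

Let size_biased_ge0 i : (i < N)%nat -> 0 <= lam N i / lN lam N.
Proof. intros Hi. apply Rlt_le, Rdiv_lt_0_compat; [auto|apply sumN_gt0; assumption]. Qed.

Lemma nuN_ge0 : 0 <= nuN lam N.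
Proof.
  unfold nuN. apply Rmult_le_pos.
  - apply sumN_ge0. intros; apply pow2_ge_0.
  - left. apply Rinv_0_lt_compat, sumN_gt0; assumption.
Qed.

Lemma fin_var_size_biased_le P : (forall i, (i < N)%nat -> lam N i <= P) ->
  fin_var N (fun m => lam N m / lN lam N) (lam N) <= P * nuN lam N.
Proof.
  intros Hmax. rewrite <- nuN_size_biased_mean.
  apply fin_var_le_mul_mean; auto.
  intros i Hi. split; [apply Rlt_le|]; auto.
Qed.

Lemma fin_var_size_biased_ge0 : 0 <= fin_var N (fun m => lam N m / lN lam N) (lam N).
Proof. apply fin_var_ge0, size_biased_ge0. Qed.

Lemma nat_var_gN :
  nat_var (gN lam N) = fin_var N (fun m => lam N m / lN lam N) (lam N) + nuN lam N.
Proof.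
  rewrite <- nuN_size_biased_mean.
  apply (nat_var_mixture N _ (fun i => poisson (lam N i))).
  - exact size_biased_sum.
  - intros n. apply gN_poisson_mixture, HN.
  - intros; apply is_series_poisson.
  - intros; apply is_series_poisson_mean.
  - intros; apply is_series_poisson_2nd_moment.
Qed.

End FixedSize.

Lemma Rpower_INR_ge1 N g : (1 <= N)%nat -> 0 <= g -> 1 <= Rpower (INR N) g.
Proof.
  intros HN Hg. rewrite <- (Rpower_O (INR N)) by (apply lt_0_INR; lia).
  apply Rle_Rpower; [apply (le_INR 1)|]; assumption.
Qed.

Lemma bigO_decay_bounded (u : nat -> R) (c a : R) : 0 <= a ->
  bigO (fun N => u N - c) (fun N => Rpower (INR N) (- a)) ->
  exists K N0, 0 <= K /\ forall N, (N0 <= N)%nat -> u N <= K.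
Proof.
  intros Ha (C & N1 & HC). exists (Rabs c + Rabs C), (Nat.max N1 1).
  split; [pose proof (Rabs_pos c); pose proof (Rabs_pos C); lra|].
  intros N HN. specialize (HC N ltac:(lia)).
  assert (Hr : 0 < Rpower (INR N) (- a) <= 1).
  { rewrite Rpower_Ropp. pose proof (Rpower_INR_ge1 N a ltac:(lia) Ha).
    split; [apply Rinv_0_lt_compat; lra|]. rewrite <- Rinv_1. apply Rinv_le_contravar; lra. }
  pose proof (Rle_abs (u N - c)). pose proof (Rle_abs c). pose proof (Rle_abs C).
  pose proof (Rabs_pos C). nra.
Qed.

Theorem lemmaD5 (lam : nat -> nat -> R) (tau eps : R)
  (Hpos : forall N i : nat, (i < N)%nat -> 0 < lam N i)
  (C1 : exists mu nu a1 : R, 0 < mu /\ 1 < nu /\ 0 < a1 /\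
          bigO (fun N => muN lam N - mu) (fun N => Rpower (INR N) (- a1)) /\
          bigO (fun N => nuN lam N - nu) (fun N => Rpower (INR N) (- a1)))
  (C2 : exists (f g : nat -> R) (a2 : R), 0 < a2 /\
          (exists N0 : nat, forall N : nat, (N0 <= N)%nat ->
              ex_series (fun j => Rabs (fN lam N j - f j)) /\
              ex_series (fun j => Rabs (gN lam N j - g j))) /\
          bigO (fun N => dTV (fN lam N) f) (fun N => Rpower (INR N) (- a2)) /\
          bigO (fun N => dTV (gN lam N) g) (fun N => Rpower (INR N) (- a2)))
  (Htau : 3 < tau)
  (C3 : forall e : R, 0 < e -> / (tau - 1) + e < / 2 ->
          (exists B : R, exists N0 : nat, forall N : nat, (N0 <= N)%nat ->
              / INR N * sumN N (fun i => Rpower (lam N i) (tau - 1 - e)) <= B) /\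
          (forall N i : nat, (i < N)%nat -> lam N i <= Rpower (INR N) (/ (tau - 1) + e)))
  (Heps : 0 < eps) (Hgam : / (tau - 1) + eps < / 2) :
  bigO (fun N => fin_var N (fun m => lam N m / lN lam N) (lam N))
       (fun N => Rpower (INR N) (/ (tau - 1) + eps)) /\
  bigO (fun N => nat_var (gN lam N))
       (fun N => Rpower (INR N) (/ (tau - 1) + eps)).
Proof.
  destruct C1 as (mu & nu & a1 & _ & _ & Ha1 & _ & Hnu).
  destruct (bigO_decay_bounded _ _ _ (Rlt_le _ _ Ha1) Hnu) as (K & N0 & HK0 & HK).
  destruct (C3 eps Heps Hgam) as [_ Hmax].
  assert (Hgam0 : 0 <= / (tau - 1) + eps).
  { assert (0 < / (tau - 1)) by (apply Rinv_0_lt_compat; lra). lra. }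
  split; [exists K | exists (2 * K)]; exists (Nat.max N0 1); intros N HN;
    assert (HN0 : N <> 0%nat) by lia;
    set (P := Rpower (INR N) (/ (tau - 1) + eps));
    assert (HP : 1 <= P) by (apply Rpower_INR_ge1; [lia|exact Hgam0]);
    pose proof (HK N ltac:(lia));
    pose proof (nuN_ge0 lam N HN0 (Hpos N));
    pose proof (fin_var_size_biased_ge0 lam N HN0 (Hpos N));
    pose proof (fin_var_size_biased_le lam N HN0 (Hpos N) P (Hmax N)).
  - rewrite Rabs_pos_eq by assumption. nra.
  - rewrite (nat_var_gN lam N HN0 (Hpos N)), Rabs_pos_eq by lra. nra.
Qed.
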